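(* Let $m\in\{2,3,\dots\}\cup\{\infty\}$ and let $T_n$ be uniformly distributed on $\mathsf{T}^{(m)}_n$. Given $T_n$, let $v^*$ be a uniformly chosen vertex of $T_n$ and $T^{( * )}_n$ the subtree of $T_n$ rooted at $v^*$ (consisting of $v^*$ and its descendants). Then for every $1\leq k\leq n$, conditionally on $\#T^{( * )}_n=k$, $T^{( * )}_n$ is uniformly distributed on $\mathsf{T}^{(m)}_k$.
   Context: $\mathsf{T}^{(m)}_n$ is the set of rooted unordered trees with $n$ vertices in which every vertex has at most $m$ children; $\#t$ is the number of vertices of $t$. *)

From HB Require Import structures.
From mathcomp Require Import all_boot all_order all_algebra.
Set Implicit Arguments. Unset Strict Implicit. Unset Printing Implicit Defensive.
Import Order.TTheory GRing.Theory Num.Theory.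

(* Plane (ordered) rooted trees; an unordered rooted tree is represented by
   its unique canonical representative (children sorted, recursively). *)
Inductive tree := Node of seq tree.

Fixpoint enc (t : tree) : GenTree.tree unit :=
  let: Node l := t in GenTree.Node 0 (map enc l).
Fixpoint dec (g : GenTree.tree unit) : tree :=
  match g with GenTree.Leaf _ => Node [::] | GenTree.Node _ l => Node (map dec l) end.
Fixpoint encK t : dec (enc t) = t :=
  match t with Node l => f_equal Node
    ((fix aux l : map dec (map enc l) = l :=
        match l with [::] => erefl | a :: l' => f_equal2 cons (encK a) (aux l') end) l)
  end.
HB.instance Definition _ := Countable.copy tree (can_type encK).

Fixpoint nverts (t : tree) : nat := let: Node l := t in (sumn (map nverts l)).+1.

(* m = None encodes m = infinity *)
Definition le_bound (m : option nat) (d : nat) : bool :=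
  if m is Some m' then d <= m' else true.

Fixpoint deg_ok (m : option nat) (t : tree) : bool :=
  let: Node l := t in le_bound m (size l) && all (deg_ok m) l.

Fixpoint canonical (t : tree) : bool :=
  let: Node l := t in sorted (fun a b => pickle a <= pickle b) l && all canonical l.

Definition inT (m : option nat) (n : nat) (t : tree) : bool :=
  [&& canonical t, deg_ok m t & nverts t == n].

(* the fringe subtrees of t, one per vertex (preorder) *)
Fixpoint fringes (t : tree) : seq tree :=
  let: Node l := t in t :: flatten (map fringes l).

Definition enumerates (E : seq tree) (P : pred tree) : Prop :=
  uniq E /\ forall t, (t \in E) = P t.

Local Open Scope ring_scope.
(* P(T* in A) where T uniform on the list E and v* uniform among vertices of T *)
Definition prob_sub (E : seq tree) (A : pred tree) : rat :=
  \sum_(t <- E) (1 / (size E)%:R) * ((count A (fringes t))%:R / (nverts t)%:R).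

From Pilot Require Import Defs.
From mathcomp Require Import all_boot all_order all_algebra ring.
Set Implicit Arguments. Unset Strict Implicit.

(* For trees s, s' of the same size in T^(m), replacing every fringe subtree
   equal to s by s' and vice versa (and re-sorting children) is an involution
   of T^(m)_n exchanging the occurrences of s and s' as fringe subtrees.
   Hence the expected number of fringe subtrees equal to s is the same for all
   s in T^(m)_k, so conditioning on the size k of the fringe subtree at a
   uniform vertex leaves it uniform.  The conditioning event has positive
   probability because s hangs below a path of n - k vertices. *)

Lemma count_uniq_enum (T : eqType) (E : seq T) (a : pred T) (l : seq T) :
  uniq E -> {in l, forall x, a x = (x \in E)} ->
  count a l = \sum_(u <- E) count (pred1 u) l.
Proof.
move=> uE; elim: l => [|x l IHl] al /=; first by rewrite big1.
rewrite big_split /= IHl => [|y ly]; last by apply: al; rewrite inE ly orbT.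
rewrite al ?mem_head // -count_uniq_mem // -sum1_count big_mkcond /=.
by congr (_ + _); apply: eq_bigr => u _; rewrite eq_sym; case: eqP.
Qed.

Lemma sumn_map_sort (T : eqType) (leT : rel T) (f : T -> nat) l :
  sumn (map f (sort leT l)) = sumn (map f l).
Proof. by apply: perm_sumn; apply: perm_map; rewrite perm_sort. Qed.

Definition le_pickle (a b : tree) := pickle a <= pickle b.

Lemma le_pickle_total : total le_pickle.
Proof. by move=> a b; apply: leq_total. Qed.
Lemma le_pickle_trans : transitive le_pickle.
Proof. by move=> a b c; apply: leq_trans. Qed.
Lemma le_pickle_anti : antisymmetric le_pickle.
Proof. by move=> a b /anti_leq; apply: (pcan_inj pickleK). Qed.

Lemma nverts_child l c : c \in l -> nverts c < nverts (Node l).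
Proof.
rewrite ltnS; elim: l => [|a l IHl] //=; rewrite inE => /orP[/eqP->|/IHl].
  exact: leq_addr.
by move/leq_trans; apply; apply: leq_addl.
Qed.

Lemma tree_ind_children (P : tree -> Prop) :
  (forall l, (forall c, c \in l -> P c) -> P (Node l)) -> forall t, P t.
Proof.
move=> IH t; elim: {t}(nverts t).+1 {-2}t (ltnSn (nverts t)) => // N IHN [l] lN.
by apply: IH => c /nverts_child cl; apply: IHN; apply: leq_trans cl _.
Qed.

Definition hereditary (P : pred tree) := forall l, P (Node l) -> all P l.

Lemma hereditary_canonical : hereditary canonical.
Proof. by move=> l /andP[]. Qed.

Lemma hereditary_deg_ok m : hereditary (deg_ok m).
Proof. by move=> l /andP[]. Qed.

Lemma mem_fringes_self t : t \in fringes t.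
Proof. by case: t => l; rewrite /= mem_head. Qed.

Lemma mem_fringesP t f : f \in fringes t ->
  f = t \/ exists2 c, c \in (let: Node l := t in l) & f \in fringes c.
Proof.
case: t => l /=; rewrite inE => /orP[/eqP->|/flattenP[_ /mapP[c cl ->] fc]].
  by left.
by right; exists c.
Qed.

Lemma fringes_hereditary (P : pred tree) t f :
  hereditary P -> f \in fringes t -> P t -> P f.
Proof.
move=> hP; elim/tree_ind_children: t => l IH /mem_fringesP[->//|[c cl fc]].
by move/hP/allP/(_ c cl); apply: IH.
Qed.

Lemma nverts_fringes t f : f \in fringes t -> nverts f <= nverts t.
Proof.
elim/tree_ind_children: t => l IH /mem_fringesP[->//|[c cl fc]].
exact: leq_trans (IH c cl fc) (ltnW (nverts_child cl)).
Qed.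

Lemma count_fringes_Node (a : pred tree) l :
  count a (fringes (Node l)) = a (Node l) + sumn [seq count a (fringes c) | c <- l].
Proof. by rewrite /= count_flatten -map_comp. Qed.

Lemma count_fringes_pred1_small u t :
  nverts t < nverts u -> count (pred1 u) (fringes t) = 0.
Proof.
move=> tu; apply/eqP; rewrite -leqn0 leqNgt -has_count; apply/hasPn => f tf /=.
by apply: contraTneq tu => <-; rewrite -leqNgt nverts_fringes.
Qed.

Lemma count_fringes_pred1_le u t :
  nverts t <= nverts u -> count (pred1 u) (fringes t) = (t == u).
Proof.
case: t => l tu; rewrite count_fringes_Node /=.
suff -> : sumn [seq count (pred1 u) (fringes c) | c <- l] = 0 by rewrite addn0.
rewrite sumnE big_map big1_seq // => c /andP[_ cl].
by rewrite count_fringes_pred1_small // (leq_trans (nverts_child cl)).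
Qed.

Fixpoint swap (s s' : tree) (t : tree) : tree := let: Node l := t in
  if Node l == s then s' else if Node l == s' then s
  else Node (sort le_pickle (map (swap s s') l)).

Section Swap.
Variables s s' : tree.
Hypothesis nverts_s' : nverts s' = nverts s.

Lemma swapE l : swap s s' (Node l) = if Node l == s then s'
  else if Node l == s' then s else Node (sort le_pickle (map (swap s s') l)).
Proof. by []. Qed.

Lemma swap_s : swap s s' s = s'.
Proof. by case: s => l /=; rewrite eqxx. Qed.

Lemma swap_s' : swap s s' s' = s.
Proof.
have [e|s's] := eqVneq s' s; first by rewrite {2}e swap_s e.
by case: s' s's => l s's /=; rewrite (negbTE s's) eqxx.
Qed.

Lemma nverts_swap t : nverts (swap s s' t) = nverts t.
Proof.
elim/tree_ind_children: t => l IH; rewrite swapE.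
case: eqP => [->//|_]; case: eqP => [->//|_] /=.
rewrite sumn_map_sort -map_comp.
by congr (sumn _).+1; apply/eq_in_map => c /IH.
Qed.

Lemma canonical_swap t : canonical s -> canonical s' ->
  canonical t -> canonical (swap s s' t).
Proof.
move=> cs cs'; elim/tree_ind_children: t => l IH /andP[_ /allP cl] /=.
case: ifP => // _; case: ifP => // _ /=.
rewrite sort_sorted ?all_sort; last exact: le_pickle_total.
by apply/allP => _ /mapP[c lc ->]; apply/IH/cl.
Qed.

Lemma deg_ok_swap m t : deg_ok m s -> deg_ok m s' ->
  deg_ok m t -> deg_ok m (swap s s' t).
Proof.
move=> ds ds'; elim/tree_ind_children: t => l IH /andP[dl /allP cl] /=.
case: ifP => // _; case: ifP => // _ /=.
rewrite size_sort size_map dl all_sort.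
by apply/allP => _ /mapP[c lc ->]; apply/IH/cl.
Qed.

Lemma swap_small t : canonical t -> nverts t < nverts s -> swap s s' t = t.
Proof.
elim/tree_ind_children: t => l IH /andP[sl /allP cl] ls.
have ls_s : Node l != s by apply: contraTneq ls => ->; rewrite ltnn.
have ls_s' : Node l != s' by apply: contraTneq ls => ->; rewrite nverts_s' ltnn.
rewrite swapE (negbTE ls_s) (negbTE ls_s').
have -> : map (swap s s') l = l.
  rewrite -[RHS]map_id; apply/eq_in_map => c lc.
  exact: IH (cl c lc) (ltn_trans (nverts_child lc) ls).
by rewrite sorted_sort //; apply: le_pickle_trans.
Qed.

Lemma swap_Node_neq l : canonical (Node l) -> Node l != s -> Node l != s' ->
  swap s s' (Node l) != s /\ swap s s' (Node l) != s'.
Proof.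
move=> cl ls ls'.
have [lsn|lsn] := eqVneq (nverts (Node l)) (nverts s).
  suff -> : swap s s' (Node l) = Node l by [].
  case/andP: cl => sl /allP cl; rewrite swapE (negbTE ls) (negbTE ls').
  have -> : map (swap s s') l = l.
    rewrite -[RHS]map_id; apply/eq_in_map => c lc.
    by apply: swap_small; [exact: cl | rewrite -lsn nverts_child].
  by rewrite sorted_sort //; apply: le_pickle_trans.
split; first by apply: contraNneq lsn => <-; rewrite nverts_swap.
by apply: contraNneq lsn => e; rewrite -nverts_s' -e nverts_swap.
Qed.

Lemma swapK t : canonical t -> swap s s' (swap s s' t) = t.
Proof.
elim/tree_ind_children: t => l IH cl.
have [->|ls] := eqVneq (Node l) s; first by rewrite swap_s swap_s'.
have [->|ls'] := eqVneq (Node l) s'; first by rewrite swap_s' swap_s.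
have [sls sls'] := swap_Node_neq cl ls ls'.
rewrite swapE (negbTE ls) (negbTE ls') in sls sls' *.
rewrite swapE (negbTE sls) (negbTE sls'); case/andP: cl => sl /allP cl.
congr Node; rewrite -[RHS](sorted_sort le_pickle_trans sl).
apply/(perm_sortP le_pickle_total le_pickle_trans le_pickle_anti).
have {2}-> : l = map (swap s s') (map (swap s s') l).
  rewrite -map_comp -[LHS]map_id; apply/eq_in_map => c lc.
  by rewrite /= (IH c lc (cl c lc)).
by rewrite perm_map // perm_sort.
Qed.

Lemma count_fringes_swap t : canonical t ->
  count (pred1 s) (fringes (swap s s' t)) = count (pred1 s') (fringes t).
Proof.
elim/tree_ind_children: t => l IH cl.
have [->|ls] := eqVneq (Node l) s.
  by rewrite swap_s !count_fringes_pred1_le ?nverts_s' // eq_sym.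
have [->|ls'] := eqVneq (Node l) s'.
  by rewrite swap_s' !count_fringes_pred1_le ?nverts_s' // !eqxx.
have [sls _] := swap_Node_neq cl ls ls'.
move: sls; rewrite swapE (negbTE ls) (negbTE ls') => sls.
rewrite !count_fringes_Node /= (negbTE sls) (negbTE ls').
rewrite sumn_map_sort -map_comp.
by case/andP: cl => _ /allP cl; congr sumn; apply/eq_in_map => c lc; apply/IH/cl.
Qed.

End Swap.

Lemma sum_count_fringes_swap m n k En s s' :
  enumerates En (inT m n) -> inT m k s -> inT m k s' ->
  \sum_(t <- En) count (pred1 s) (fringes t) =
  \sum_(t <- En) count (pred1 s') (fringes t).
Proof.
move=> [uEn memEn] /and3P[cs ds /eqP ns] /and3P[cs' ds' /eqP ns'].
have nss : nverts s' = nverts s by rewrite ns ns'.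
have cEn t : t \in En -> canonical t by rewrite memEn => /and3P[].
have swapEn t : t \in En -> swap s s' t \in En.
  rewrite !memEn => /and3P[ct dt nt]; apply/and3P; split.
  - exact: canonical_swap.
  - exact: deg_ok_swap.
  - by rewrite nverts_swap.
have perm_swapEn : perm_eq (map (swap s s') En) En.
  apply: uniq_perm => //.
    rewrite map_inj_in_uniq // => a b aE bE eqab.
    by rewrite -(swapK nss (cEn _ aE)) eqab swapK ?cEn.
  move=> t; apply/mapP/idP => [[u uE ->]|tE]; first exact: swapEn.
  by exists (swap s s' t); rewrite ?swapK ?cEn ?swapEn.
rewrite -(perm_big _ perm_swapEn) big_map.
by apply: eq_big_seq => t tE; rewrite count_fringes_swap ?cEn.
Qed.

Lemma sum_count_fringes_nverts m n k En Ek s :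
  enumerates En (inT m n) -> enumerates Ek (inT m k) -> inT m k s ->
  \sum_(t <- En) count (fun u => nverts u == k) (fringes t) =
  size Ek * \sum_(t <- En) count (pred1 s) (fringes t).
Proof.
move=> hEn [uEk memEk] hs.
rewrite (eq_big_seq (fun t => \sum_(u <- Ek) count (pred1 u) (fringes t))).
  rewrite exchange_big mulnC -iter_addn_0 -count_predT -big_const_seq.
  apply: eq_big_seq => u Eku.
  by apply: (sum_count_fringes_swap hEn) hs; rewrite -memEk.
move=> t; case: hEn => _ ->; case/and3P => ct dt _.
apply: count_uniq_enum => // f tf; rewrite memEk /inT.
by rewrite (fringes_hereditary hereditary_canonical tf ct)
  (fringes_hereditary (@hereditary_deg_ok m) tf dt).
Qed.

Definition chain (s : tree) j := iter j (fun t => Node [:: t]) s.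

Lemma inT_chain m k s j :
  Defs.le_bound m 1 -> inT m k s -> inT m (j + k) (chain s j).
Proof.
move=> m1; elim: j => [//|j IHj] /IHj /and3P[ct dt /eqP nt].
by apply/and3P; rewrite /= ct dt nt addn0 !andbT.
Qed.

Lemma mem_fringes_chain s j : s \in fringes (chain s j).
Proof.
by elim: j => [|j IHj] /=; rewrite ?mem_fringes_self // inE cats0 IHj orbT.
Qed.

Lemma sum_count_fringes_gt0 m n k En s : Defs.le_bound m 1 -> k <= n ->
  enumerates En (inT m n) -> inT m k s ->
  0 < \sum_(t <- En) count (pred1 s) (fringes t).
Proof.
move=> m1 kn [uEn memEn] hs.
have chainEn : chain s (n - k) \in En by rewrite memEn -{1}(subnK kn) inT_chain.
rewrite (bigD1_seq _ chainEn uEn) /=; apply: ltn_addr; rewrite -has_count.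
by apply/hasP; exists s; rewrite ?mem_fringes_chain /=.
Qed.

Local Open Scope ring_scope.
Import GRing.Theory Num.Theory.

Lemma prob_subE (E : seq tree) n A : {in E, forall t, nverts t = n} ->
  prob_sub E A = (size E)%:R^-1 / n%:R * (\sum_(t <- E) count A (fringes t))%:R.
Proof.
move=> nE; rewrite /prob_sub natr_sum big_distrr; apply: eq_big_seq => t tE /=.
by rewrite nE // div1r mulrA mulrAC.
Qed.

Theorem lemma25 (m : option nat) (hm : if m is Some m' then (2 <= m')%N else true)
  (n k : nat) (hk1 : (1 <= k)%N) (hkn : (k <= n)%N)
  (En Ek : seq tree) (hEn : enumerates En (inT m n)) (hEk : enumerates Ek (inT m k))
  (s : tree) (hs : inT m k s) :
  prob_sub En (pred1 s) / prob_sub En (fun u : tree => (nverts u == k)%N) = 1 / (size Ek)%:R.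
Proof.
have nEn : {in En, forall t, nverts t = n}.
  by case: hEn => _ memEn t; rewrite memEn => /and3P[_ _ /eqP].
have m1 : Defs.le_bound m 1 by case: m hm {hEn hEk hs} => // m' /ltnW.
have c_gt0 := sum_count_fringes_gt0 m1 hkn hEn hs.
have sEk_gt0 : (0 < size Ek)%N.
  by case: hEk hs => _ memEk; rewrite -memEk; case: (Ek).
have sEn_gt0 : (0 < size En)%N by move: c_gt0; case: (En) => [|//]; rewrite big_nil.
have n_gt0 : (0 < n)%N := leq_trans hk1 hkn.
rewrite !(prob_subE _ nEn) (sum_count_fringes_nverts hEn hEk hs) natrM.
by field; rewrite !pnatr_eq0 -!lt0n c_gt0 sEk_gt0 sEn_gt0 n_gt0.
Qed.
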